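(* If $q=p^n$ is odd, then $E_{(q-3)/2}(x)+E_{(q-1)/2}(x)\equiv(x-2)^{(q-1)/2}\pmod p$ as polynomials in $\mathbb Z[x]$.
   Context: $E_k\in\mathbb Z[x]$ (Dickson polynomials of the second kind) are defined by $E_0=1$, $E_1=x$, $E_{k+2}=xE_{k+1}-E_k$. *)

From HB Require Import structures.
From mathcomp Require Import all_boot all_order all_algebra.
Set Implicit Arguments. Unset Strict Implicit. Unset Printing Implicit Defensive.
Import GRing.Theory.
Local Open Scope ring_scope.

(* Dickson polynomials of the second kind: E_0 = 1, E_1 = x, E_{k+2} = x E_{k+1} - E_k *)
Fixpoint dickson2_pair (k : nat) : {poly int} * {poly int} :=
  match k with
  | 0%N => (1, 'X)
  | k'.+1 => let (a, b) := dickson2_pair k' in (b, 'X * b - a)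
  end.

Definition E (k : nat) : {poly int} := (dickson2_pair k).1.

Definition poly_cong_mod (m : int) (f g : {poly int}) : Prop :=
  forall i : nat, (m %| (f - g)`_i)%Z.

From HB Require Import structures.
From mathcomp Require Import all_boot all_order all_algebra.
From mathcomp Require Import zify ring.
Set Implicit Arguments.
Unset Strict Implicit.
Unset Printing Implicit Defensive.

Import GRing.Theory.
Local Open Scope ring_scope.

(* Substituting x = y + 2 gives E_k(y + 2) = sum_j C(k+1+j, 2j+1) y^j.  Writing
   q = 2m + 3, the coefficient of y^j in E_m(y+2) + E_(m+1)(y+2) is
   S = C(m+1+j, 2j+1) + C(m+2+j, 2j+1), and (m+2+j) S = q C(m+2+j, 2j+1).
   For j <= m the factor m+2+j lies strictly between 0 and q, so when q is a
   power of p the prime p must divide S; the top coefficient j = m+1 is that of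
   y^(m+1) = (x-2)^(m+1). *)

Lemma ES k : E k.+2 = 'X * E k.+1 - E k.
Proof. by rewrite /E /=; case: (dickson2_pair k). Qed.

Definition Eshift (k : nat) : {poly int} :=
  \poly_(j < k.+1) ('C(k.+1 + j, j.*2.+1))%:R.

Lemma coef_Eshift k j : (Eshift k)`_j = ('C(k.+1 + j, j.*2.+1))%:R.
Proof. by rewrite coef_poly; case: ltnP => // ?; rewrite bin_small //; lia. Qed.

Lemma bin_addSS N r :
  ('C(N.+2, r.+2) + 'C(N, r.+2) = 'C(N, r) + 2 * 'C(N.+1, r.+2))%N.
Proof. rewrite !binS; lia. Qed.

Lemma EshiftS k : Eshift k.+2 = ('X + 2%:P) * Eshift k.+1 - Eshift k.
Proof.
apply/polyP => -[|i]; rewrite coefB mulrDl coefD coefCM mulrC coefMX !coef_Eshift /=.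
  by rewrite !addn0 !bin1 add0r; lia.
have bin_eq : ('C(k.+3 + i.+1, i.+1.*2.+1) + 'C(k.+1 + i.+1, i.+1.*2.+1)
    = 'C(k.+2 + i, i.*2.+1) + 2 * 'C(k.+2 + i.+1, i.+1.*2.+1))%N.
  have := bin_addSS (k.+2 + i) i.*2.+1.
  by rewrite !(addSn, addnS) doubleS.
apply: (addIr ('C(k.+1 + i.+1, i.+1.*2.+1))%:R).
by rewrite -natrD bin_eq natrD natrM subrK; ring.
Qed.

Lemma E_comp k : E k = Eshift k \Po ('X - 2%:P).
Proof.
suff : E k = Eshift k \Po ('X - 2%:P) /\ E k.+1 = Eshift k.+1 \Po ('X - 2%:P).
  by case.
elim: k => [|k [IHk IHk1]]; last first.
  by rewrite ES EshiftS comp_polyB comp_polyM comp_polyD comp_polyX comp_polyC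
    subrK -IHk -IHk1.
have Eshift0 : Eshift 0 = 1.
  by apply/polyP => -[|j]; rewrite coef_Eshift coefC //= bin_small //; lia.
have Eshift1 : Eshift 1 = 'X + 2%:P.
  apply/polyP => -[|[|j]]; rewrite coef_Eshift coefD coefX coefC //=.
  by rewrite bin_small //; lia.
rewrite Eshift0 Eshift1 comp_polyC comp_polyD comp_polyX comp_polyC subrK.
by split.
Qed.

Lemma poly_cong_mod_comp (m : int) (f g u : {poly int}) :
  poly_cong_mod m f g -> poly_cong_mod m (f \Po u) (g \Po u).
Proof.
move=> fg i; rewrite -comp_polyB.
have -> : f - g = m *: \poly_(j < size (f - g)) ((f - g)`_j %/ m)%Z.
  apply/polyP => j; rewrite coefZ coef_poly.
  case: ltnP => hj; first by rewrite mulrC divzK.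
  by rewrite mulr0 nth_default.
by rewrite comp_polyZ coefZ dvdz_mulr.
Qed.

Lemma mul_binD N r :
  (N.+1 * ('C(N, r) + 'C(N.+1, r)) = (N.*2.+2 - r) * 'C(N.+1, r))%N.
Proof.
have := mul_bin_down N.+1 r; rewrite /= mulnDr => ->.
case: (leqP r N.+1) => [le_r_N | lt_N_r]; last by rewrite bin_small // !muln0.
by rewrite -mulnDl; congr (_ * _); lia.
Qed.

Lemma prime_dvd_of_dvd_mul (p e a b : nat) :
  prime p -> (0 < a < p ^ e)%N -> (p ^ e %| a * b)%N -> (p %| b)%N.
Proof.
move=> p_pr /andP[a_gt0 a_lt] dvd_ab; apply/negPn/negP => p_ndvd_b.
have cop : coprime (p ^ e) b by apply: coprimeXl; rewrite prime_coprime.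
move: dvd_ab; rewrite Gauss_dvdl // => /(dvdn_leq a_gt0).
by rewrite leqNgt a_lt.
Qed.

Lemma Eshift_add_cong (p e m : nat) : prime p -> (p ^ e = m.*2 + 3)%N ->
  poly_cong_mod p%:Z (Eshift m + Eshift m.+1) 'X^(m.+1).
Proof.
move=> p_pr q_eq j; rewrite coefB coefD !coef_Eshift coefXn.
case: (ltngtP j m.+1) => hj.
- rewrite subr0 -natrD dvdzE natz absz_nat.
  apply: (prime_dvd_of_dvd_mul (e := e) (a := m.+2 + j) p_pr); first by rewrite q_eq; lia.
  by rewrite (mul_binD (m.+1 + j)) [X in (X * _)%N](_ : _ = p ^ e)%N ?dvdn_mulr //; lia.
- by rewrite !bin_small ?subr0 ?addr0 ?dvdz0 //; lia.
- rewrite hj bin_small; last lia.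
  by rewrite (_ : m.+2 + m.+1 = m.+1.*2.+1)%N ?binn ?add0r ?subrr ?dvdz0 //; lia.
Qed.

Theorem corollary7p6 (p n : nat) :
  prime p -> (0 < n)%N -> odd (p ^ n) ->
  poly_cong_mod (p%:Z)
    (E ((p ^ n - 3) %/ 2) + E ((p ^ n - 1) %/ 2))
    (('X - 2%:P) ^+ ((p ^ n - 1) %/ 2)).
Proof.
move=> p_pr n_gt0 q_odd.
have q_gt1 : (1 < p ^ n)%N by rewrite -(exp1n n) ltn_exp2r // prime_gt1.
have q_mod2 := modn2 (p ^ n); rewrite q_odd /= in q_mod2.
set m := ((p ^ n - 3) %/ 2)%N.
have q_eq : (p ^ n = m.*2 + 3)%N by rewrite /m; lia.
have -> : ((p ^ n - 1) %/ 2 = m.+1)%N by rewrite q_eq; lia.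
rewrite !E_comp -comp_polyD -comp_Xn_poly.
exact: poly_cong_mod_comp (Eshift_add_cong p_pr q_eq).
Qed.
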